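(* Fix a cooperative Markov game and a stationary joint policy $\pi$ as described in the context. Let $f:(\mathbf S\times\mathbf A)^*\to\{0,1\}$ be an arbitrary function. Communication availability at time $t$ is $\lambda_t=f(\mathbf s_0\mathbf a_0\cdots\mathbf s_{t-1}\mathbf a_{t-1})$, with $\lambda_0=f(\varepsilon)$ for the empty string $\varepsilon$. Let $\Gamma^{img}_f$ be the distribution over joint paths induced by imaginary play (Algorithm 1) whose loss time is the random time $t_{loss}=\min\{t:\lambda_t=0\}$, with $t_{loss}=\infty$ if no such $t$ exists. Then $$KL\big(\Gamma^{full}\,\|\,\Gamma^{img}_{0}\big)\ge KL\big(\Gamma^{full}\,\|\,\Gamma^{img}_{f}\big).$$
   Context: Multiagent model: there are $N$ agents. Agent $i$ is modeled by a finite MDP $\mathcal{M}^i=(\mathcal{S}^i,s_I^i,\mathcal{A}^i,\mathcal{T}^i)$. Here $\mathcal{S}^i$ is a finite state set, $s_I^i\in\mathcal{S}^i$ is the initial state, $\mathcal{A}^i$ is a finite action set, and $\mathcal{T}^i:\mathcal{S}^i\times\mathcal{A}^i\to\Delta(\mathcal{S}^i)$ is the transition kernel. The cooperative Markov game has joint state set $\mathbf{S}=\prod_i\mathcal{S}^i$, joint initial state $\mathbf{s}_I=(s_I^1,\dots,s_I^N)$, and joint action set $\mathbf{A}=\prod_i\mathcal{A}^i$. Its transition kernel is $\mathbf{T}(\mathbf{s},\mathbf{a},\mathbf{y})=\prod_{i}\mathcal{T}^i(s^i,a^i,y^i)$. A stationary joint policy is a map $\pi:\mathbf{S}\to\Delta(\mathbf{A})$.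 A joint path is an infinite sequence $\mathbf{s}_0\mathbf{a}_0\mathbf{s}_1\mathbf{a}_1\cdots\in(\mathbf{S}\times\mathbf{A})^\omega$ with $\mathbf{s}_0=\mathbf{s}_I$. All random sampling below is mutually independent given the stated conditioning. Full-communication execution: at each time $t$, $\mathbf{a}_t\sim\pi(\mathbf{s}_t)$ is drawn once for the whole team. Each agent $i$ then moves to $s^i_{t+1}\sim\mathcal{T}^i(s^i_t,a^i_t)$. $\Gamma^{full}$ denotes the resulting distribution over joint paths. Imaginary play with loss time $t_{loss}\in\{0,1,\dots\}\cup\{\infty\}$ (Algorithm 1): - For $t<t_{loss}$, the team acts exactly as under full communication. Each agent $i$ records $\hat s^j_{t,i}=s^j_t$ for all $j\ne i$, and records $\hat{\mathbf a}_{t,i}=\mathbf a_t$. - For $t\ge t_{loss}$, each agent $i$ acts separately and does not observe the others. First it sets its imaginary teammate states. If $t=0$, it sets $\hat s^j_{0,i}=s_I^j$ for $j\neq i$. Otherwise it samples $\hat s^j_{t,i}\sim\mathcal{T}^j(\hat s^j_{t-1,i},\hat a^j_{t-1,i})$ for $j\ne i$, where $\hat a^j_{t-1,i}$ is the $j$-th component of $\hat{\mathbf a}_{t-1,i}$. - Agent $i$ then samples its own joint action $\hat{\mathbf a}_{t,i}\sim\pi(\hat s^1_{t,i},\dots,\hat s^{i-1}_{t,i},s^i_t,\hat s^{i+1}_{t,i},\dots,\hat s^N_{t,i})$. - Agent $i$ executes only its own component $\hat a^i_{t,i}$, and moves to $s^i_{t+1}\sim\mathcal{T}^i(s^i_t,\hat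 a^i_{t,i})$. - The realized joint action at time $t$ is $\mathbf a_t=(\hat a^1_{t,1},\dots,\hat a^N_{t,N})$. $\Gamma^{img}_{t_{loss}}$ denotes the induced distribution over realized joint paths. Once communication is lost in Algorithm 1, it is never used again. $KL$ is Kullback–Leibler divergence. *)

From HB Require Import structures.
From mathcomp Require Import all_boot all_order all_algebra.
From mathcomp Require Import all_classical all_reals.
From mathcomp Require Import ereal exp.
Set Implicit Arguments. Unset Strict Implicit. Unset Printing Implicit Defensive.
Import Order.TTheory GRing.Theory Num.Theory.
Local Open Scope ring_scope.

Section MarkovGame.
Variables (R : realType) (N : nat) (S A : 'I_N -> finType).

Definition JS := {dffun forall i : 'I_N, S i}.
Definition JA := {dffun forall i : 'I_N, A i}.

Variables (sI : JS) (T : forall i : 'I_N, S i -> A i -> S i -> R) (pi : JS -> JA -> R).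

Definition is_dist (X : finType) (p : X -> R) := (forall x, 0 <= p x) /\ \sum_x p x = 1.

Definition JT (s : JS) (a : JA) (y : JS) : R := \prod_i T (s i) (a i) (y i).

Definition ind (b : bool) : R := if b then 1 else 0.

(* probability of a finite prefix s_0 a_0 ... s_{n-1} a_{n-1} under full communication
   (d is the default element used by nth; it is h's first element) *)
Definition full_prob_d (d : JS * JA) (h : seq (JS * JA)) : R :=
  let s t := (nth d h t).1 in let a t := (nth d h t).2 in
  ind (s 0%N == sI) * (\prod_(t < size h) pi (s t) (a t))
  * \prod_(t < (size h).-1) JT (s t) (a t) (s t.+1).

Definition full_prob (h : seq (JS * JA)) : R :=
  if h is d :: _ then full_prob_d d h else 1.

(* probability of a finite prefix of length n under imaginary play with loss time L < n.
   Agent i's hidden variables for times L+k (k < n-L): its imaginary joint state hs_k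
   (whose own component is forced to equal its true state) and its sampled joint action
   ha_k (whose own component is the realized action a^i_{L+k}). *)
Definition img_prob_d (d : JS * JA) (L : nat) (h : seq (JS * JA)) : R :=
  let n := size h in
  let s t := (nth d h t).1 in let a t := (nth d h t).2 in
  let hidden (i : 'I_N) :=
    \sum_(hs : (n - L).-tuple JS) \sum_(ha : (n - L).-tuple JA)
      \prod_(k < n - L)
        (let hsk := nth d.1 hs k in let hak := nth d.2 ha k in
         ind (hsk i == s (L + k)%N i) * ind (hak i == a (L + k)%N i)
         * (if k == 0%N :> nat then
              (if L == 0%N then \prod_(j | j != i) ind (hsk j == sI j)
               else \prod_(j | j != i) T (s L.-1 j) (a L.-1 j) (hsk j))
            else \prod_(j | j != i)
                   T (nth d.1 hs k.-1 j) (nth d.2 ha k.-1 j) (hsk j))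
         * pi hsk hak) in
  ind (s 0%N == sI) * (\prod_(t < L) pi (s t) (a t))
  * (\prod_(t < n.-1) JT (s t) (a t) (s t.+1))
  * \prod_i hidden i.

Definition img_prob (L : nat) (h : seq (JS * JA)) : R :=
  if h is d :: _ then img_prob_d d L h else 1.

(* Gamma^img_{t_loss} for a deterministic loss time tl (prefix probabilities) *)
Definition img_loss_prob (tl : nat) (h : seq (JS * JA)) : R :=
  if (tl < size h)%N then img_prob tl h else full_prob h.

(* loss time t_loss = min { t : lambda_t = 0 }, lambda_t = f (s_0 a_0 ... s_{t-1} a_{t-1});
   computed on a prefix h; equals size h if no loss occurs within h *)
Definition loss_time (f : seq (JS * JA) -> bool) (h : seq (JS * JA)) : nat :=
  find (fun t => ~~ f (take t h)) (iota 0 (size h)).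

Definition img_f_prob (f : seq (JS * JA) -> bool) (h : seq (JS * JA)) : R :=
  let L := loss_time f h in
  if (L < size h)%N then img_prob L h else full_prob h.

End MarkovGame.

Definition kl_term (R : realType) (p q : R) : \bar R :=
  if p == 0 then 0%E else if q == 0 then +oo%E else (p * ln (p / q))%:E.

Definition KL_n (R : realType) (X : finType) (n : nat) (P Q : seq X -> R) : \bar R :=
  (\sum_(h : n.-tuple X) kl_term (P h) (Q h))%E.

Definition KL_path (R : realType) (X : finType) (P Q : seq X -> R) : \bar R :=
  ereal_sup (range (fun n => KL_n n P Q)).

From Pilot Require Import Defs.
From HB Require Import structures.
From mathcomp Require Import all_boot all_order all_algebra.
From mathcomp Require Import all_classical all_reals.
From mathcomp Require Import ereal exp.
From mathcomp Require Import lra ring.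
Import Order.TTheory GRing.Theory Num.Theory.
Local Open Scope ring_scope.
Set Implicit Arguments. Unset Strict Implicit. Unset Printing Implicit Defensive.

(* Write [P] for full-communication play and [Q_m] for imaginary play with loss time [m].
   On a prefix [h], [Q_m h] factors into the [P]-probability of the first [m] steps, the
   transition probabilities of the remaining ones and, for each agent [i], the probability
   under imagined teammates of the trajectory that [i] observes after time [m].  The gap
   [KL(P || Q_0) - KL(P || Q_f)] is the [P]-expectation of [ln Q_(t_loss) - ln Q_0], which
   telescopes into a sum over [m < t_loss] of the increments [ln Q_(m+1) - ln Q_m].  The
   event [m < t_loss] is decided by the first [m] steps, and conditionally on them each
   increment has nonnegative mean: it splits into a Gibbs inequality between [pi] and the
   product of its one-agent action marginals, plus one Gibbs inequality per agent comparing
   its hidden-trajectory probabilities with and without one more shared step. *)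

Section LogSum.
Variable R : realType.

Lemma ln_le_subr1 (x : R) : 0 < x -> ln x <= x - 1.
Proof.
move=> x0; have := expR_ge1Dx (ln x); rewrite lnK ?posrE //.
by rewrite addrC -lerBrDr.
Qed.

Lemma ln_prod (I : finType) (F : I -> R) :
  (forall j, 0 < F j) -> ln (\prod_j F j) = \sum_j ln (F j).
Proof.
move=> F_gt0.
suff [] : 0 < \prod_j F j /\ ln (\prod_j F j) = \sum_j ln (F j) by [].
apply: (big_ind2 (fun y z => 0 < y /\ ln y = z)) => [|x1 x2 y1 y2 [x1_gt0 <-] [x2_gt0 <-]|//].
  by rewrite ln1.
by rewrite mulr_gt0 // lnM ?posrE.
Qed.

(* Termwise, [ln x <= x - 1] at [x = v / u]. *)
Lemma gibbs_inequality (I : finType) (w u v : I -> R) :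
  (forall a, 0 <= w a) ->
  (forall a, 0 < w a -> 0 < u a /\ 0 < v a) ->
  \sum_a w a * (v a / u a) <= \sum_a w a ->
  0 <= \sum_a w a * (ln (u a) - ln (v a)).
Proof.
move=> w_ge0 uv_gt0 sum_le.
apply: (@le_trans _ _ (\sum_a (w a - w a * (v a / u a)))).
  by rewrite sumrB subr_ge0.
apply: ler_sum => a _.
have [w_gt0|] := ltP 0 (w a); last first.
  move=> w_le0; have -> : w a = 0 by apply/le_anti; rewrite w_le0 w_ge0.
  by rewrite !mul0r subrr.
case: (uv_gt0 a w_gt0) => u_gt0 v_gt0.
rewrite -[X in X - _]mulr1 -mulrBr ler_wpM2l ?w_ge0 //.
have := ln_le_subr1 (divr_gt0 v_gt0 u_gt0).
rewrite ln_div ?posrE //; lra.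
Qed.

End LogSum.

Lemma KL_nE (R : realType) (X : finType) n (P Q : seq X -> R) :
  (forall h, 0 <= P h) -> (forall h, 0 < P h -> 0 < Q h) ->
  KL_n n P Q = (\sum_(h : n.-tuple X) P h * (ln (P h) - ln (Q h)))%:E.
Proof.
move=> P_ge0 Q_gt0; rewrite /KL_n -sumEFin; apply: eq_bigr => h _; rewrite /kl_term.
case: eqP => [->|P_neq0]; first by rewrite mul0r.
have P_gt0 : 0 < P h by rewrite lt_def P_ge0 andbT; apply/eqP.
by rewrite gt_eqF ?Q_gt0 // ln_div ?posrE ?Q_gt0.
Qed.

Section TupleSums.
Variable R : nmodType.

Lemma sum_pair (U V : finType) (F : U * V -> R) :
  \sum_(x : U * V) F x = \sum_(u : U) \sum_(v : V) F (u, v).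
Proof. by rewrite (pair_bigA _ (fun u v => F (u, v))); apply: eq_bigr => -[]. Qed.

Lemma sum_tuple0 (X : finType) (F : seq X -> R) :
  \sum_(t : 0.-tuple X) F t = F [::].
Proof. by rewrite (big_pred1 [tuple]) // => t /=; apply/esym/eqP/val_inj; case: t => -[]. Qed.

Lemma sum_tuple_cons (X : finType) K (F : seq X -> R) :
  \sum_(t : K.+1.-tuple X) F t = \sum_(x : X) \sum_(t : K.-tuple X) F (x :: t).
Proof.
rewrite (pair_bigA _ (fun x (t : K.-tuple X) => F (x :: t))) /=.
rewrite (reindex (fun p : X * K.-tuple X => [tuple of p.1 :: p.2])) //=.
exists (fun t : K.+1.-tuple X => (thead t, [tuple of behead t])) => [[x t]|t] _ /=.
  by rewrite theadE; congr pair; apply: val_inj.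
by apply: val_inj => /=; case: t => -[|y t'] //= _; rewrite /thead (tnth_nth y).
Qed.

Lemma sum_tuple_cat (X : finType) m k (F : seq X -> R) :
  \sum_(h : (m + k).-tuple X) F h =
  \sum_(h1 : m.-tuple X) \sum_(h2 : k.-tuple X) F (h1 ++ h2).
Proof.
elim: m F => [|m IH] F.
  by rewrite (sum_tuple0 (fun h1 => \sum_(h2 : k.-tuple X) F (h1 ++ h2))).
rewrite sum_tuple_cons (sum_tuple_cons m (fun h1 => \sum_(h2 : k.-tuple X) F (h1 ++ h2))).
by apply: eq_bigr => x _; rewrite (IH (fun h => F (x :: h))).
Qed.

Lemma sum_tuple_zip (U V : finType) K (F : seq (U * V) -> R) :
  \sum_(g : K.-tuple (U * V)) F g =
  \sum_(hs : K.-tuple U) \sum_(ha : K.-tuple V) F (zip hs ha).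
Proof.
elim: K F => [|K IH] F.
  by rewrite sum_tuple0 (sum_tuple0 (fun hs => \sum_(ha : 0.-tuple V) F (zip hs ha)))
    (sum_tuple0 (fun ha => F (zip [::] ha))).
rewrite sum_tuple_cons (sum_tuple_cons K (fun hs => \sum_(ha : K.+1.-tuple V) F (zip hs ha))).
rewrite sum_pair; apply: eq_bigr => u _.
under [RHS]eq_bigr => hs _ do rewrite (sum_tuple_cons K (fun ha => F (zip (u :: hs) ha))) /=.
rewrite [RHS]exchange_big /=; apply: eq_bigr => v _.
by rewrite (IH (fun t => F ((u, v) :: t))).
Qed.

End TupleSums.

Lemma sum_dffun_prod (R : comPzSemiRingType) (I : finType) (S : I -> finType)
    (F : forall i, S i -> R) :
\sum_(s : {dffun forall i, S i}) \prod_i F i (s i) = \prod_i \sum_(y : S i) F i y.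
Proof.
rewrite (reindex (@dffun_of_fprod I S)); last exact/onW_bij/dffun_of_fprod_bij.
transitivity (\sum_(t : fprod S) \prod_(i in I) [ffun y => F i y] (t i)).
  by apply: eq_bigr => t _; apply: eq_bigr => i _; rewrite !ffunE.
rewrite big_fprod /= -(bigA_distr_big_dep _ (fun i j => untag 0 ([ffun y => F i y]) j)) /=.
apply: eq_bigr => i _; rewrite (big_tag (fun i (y : S i) => F i y)).
by apply: eq_bigr => j _; congr untag; apply/funext => y; rewrite ffunE.
Qed.

Lemma ler_mulKdiv (R : realFieldType) (a h n c : R) :
  0 <= a -> 0 <= h -> 0 <= n -> 0 <= c ->
  a * (h * (n / (c * h))) <= a * n / c.
Proof.
move=> a_ge0 h_ge0 n_ge0 c_ge0; have [h_gt0|] := ltP 0 h; last first.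
  move=> h_le0; have -> : h = 0 by apply/le_anti; rewrite h_le0 h_ge0.
  by rewrite !mul0r mulr0 mulr_ge0 // ?invr_ge0 // mulr_ge0.
have [c_gt0|c_le0] := ltP 0 c.
  by rewrite le_eqVlt; apply/orP; left; apply/eqP; field; rewrite !gt_eqF.
have -> : c = 0 by apply/le_anti; rewrite c_le0 c_ge0.
by rewrite !mul0r !invr0 !mulr0.
Qed.

Section Indicators.
Variable R : realType.

Lemma sum_ind_eq (I : finType) (t : I) (F : I -> R) :
  \sum_(o : I) ind R (o == t) * F o = F t.
Proof.
rewrite (bigD1 t) //= eqxx mul1r big1 ?addr0 // => o /negbTE ->.
by rewrite /ind mul0r.
Qed.

Lemma sum_partition_ind (U V : finType) (key : U -> V) (F : U -> R) :
  \sum_(u : U) F u = \sum_(v : V) \sum_(u : U) ind R (key u == v) * F u.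
Proof.
rewrite exchange_big /=; apply: eq_bigr => u _.
under eq_bigr do rewrite eq_sym.
by rewrite (sum_ind_eq (key u) (fun _ => F u)).
Qed.

Lemma prod_ind (I : finType) (P : pred I) : \prod_k ind R (P k) = ind R [forall k, P k].
Proof.
have [all_P|/forallPn [k not_Pk]] := boolP [forall k, P k].
  by rewrite big1 // => k _; move/forallP: all_P => ->.
by rewrite (bigD1 k) //= (negbTE not_Pk) /Defs.ind mul0r.
Qed.

Lemma ind_andb (b c : bool) : ind R b * ind R c = ind R (b && c).
Proof. by case: b; case: c; rewrite /Defs.ind ?mul1r ?mul0r. Qed.

End Indicators.

Lemma eq_seq_nth (U : eqType) (u v : seq U) K x0 : size u = K -> size v = K ->
  (u == v) = [forall k : 'I_K, nth x0 u k == nth x0 v k].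
Proof.
move=> size_u size_v; apply/eqP/forallP => [->|eq_uv] //.
apply: (@eq_from_nth _ x0); first by rewrite size_u size_v.
by move=> k; rewrite size_u => lt_k; apply/eqP/(eq_uv (Ordinal lt_k)).
Qed.

Lemma last_take (T : Type) (x : T) s n :
  (n <= size s)%N -> last x (take n s) = nth x (x :: s) n.
Proof.
elim: s x n => [|y s IH] x [|n] //= le_n.
by rewrite IH //; apply: set_nth_default.
Qed.


Section Chains.
Variables (R : numDomainType) (St Ac : Type).
Local Notation Y := (St * Ac)%type.

Fixpoint chain (w : nat -> Y -> R) (init : St -> R) (tr : Y -> St -> R) (g : seq Y) : R :=
  if g is x :: g' then init x.1 * w 0%N x * chain (fun t => w t.+1) (tr x) tr g' else 1.

Definition chain_next (init : St -> R) (tr : Y -> St -> R) (g : seq Y) : St -> R :=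
  if g is x :: g' then tr (last x g') else init.

Lemma chain_cat w init tr h1 h2 :
  chain w init tr (h1 ++ h2) =
  chain w init tr h1 * chain (fun t => w (size h1 + t)%N) (chain_next init tr h1) tr h2.
Proof.
elim: h1 w init => [|x h1 IH] w init /=; first by rewrite mul1r.
by rewrite IH -!mulrA; case: h1 {IH}.
Qed.

Lemma chain_nth w init tr g d :
  chain w init tr g =
  (if g is x :: _ then init x.1 else 1) * \prod_(t < size g) w t (nth d g t)
  * \prod_(t < (size g).-1) tr (nth d g t) (nth d g t.+1).1.
Proof.
elim: g w init => [|x g IH] w init /=; first by rewrite !big_ord0 !mulr1.
rewrite IH big_ord_recl /=.
case: g {IH} => [|y g] /=; first by rewrite !big_ord0 !mulr1.
rewrite [X in _ = _ * X]big_ord_recl /=; ring.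
Qed.

Lemma eq_chain w v init tr g :
  (forall t x, (t < size g)%N -> w t x = v t x) -> chain w init tr g = chain v init tr g.
Proof.
elim: g w v init => [|x g IH] w v init //= wv.
by rewrite wv // (IH _ (fun t => v t.+1)) // => t y; apply: (wv t.+1).
Qed.

Lemma chain_ge0 w init tr g :
  (forall t x, 0 <= w t x) -> (forall s, 0 <= init s) -> (forall x s, 0 <= tr x s) ->
  0 <= chain w init tr g.
Proof.
elim: g w init => [|x g IH] w init //= w_ge0 init_ge0 tr_ge0.
by rewrite !mulr_ge0 // IH.
Qed.

End Chains.

Unset Implicit Arguments.
Section ImaginaryPlay.
Variables (R : realType) (N : nat) (S A : 'I_N -> finType).
Variables (sI : JS S) (T : forall i : 'I_N, S i -> A i -> S i -> R)
  (pi : JS S -> JA A -> R).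
Hypothesis T_dist : forall i (s : S i) (a : A i), is_dist (T i s a).
Hypothesis pi_dist : forall s : JS S, is_dist (pi s).

Local Notation X := (JS S * JA A)%type.
Local Notation ind := (ind R).
Implicit Types (nu : forall j : 'I_N, S j -> R).

Definition dist_family nu := forall j, is_dist (nu j).

Definition pdist nu (s : JS S) : R := \prod_j nu j (s j).
Definition pdist_but i nu (s : JS S) : R := \prod_(j | j != i) nu j (s j).
Definition step_dist (x : X) : forall j, S j -> R := fun j => T j (x.1 j) (x.2 j).
Definition init_dist : forall j, S j -> R := fun j y => ind (y == sI j).
Definition pol (x : X) : R := pi x.1 x.2.
Definition own i (x : X) : S i * A i := (x.1 i, x.2 i).

Definition traj_prob nu : seq X -> R :=
  chain (fun _ => pol) (pdist nu) (fun x => pdist (step_dist x)).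
Definition trans_prob nu : seq X -> R :=
  chain (fun _ _ => 1) (pdist nu) (fun x => pdist (step_dist x)).
Definition mates_prob i nu : seq X -> R :=
  chain (fun _ => pol) (pdist_but i nu) (fun x => pdist_but i (step_dist x)).
Definition own_prob i (nu : S i -> R) : seq (S i * A i) -> R :=
  chain (fun _ _ => 1) nu (fun y => T i y.1 y.2).

(* Since [traj_prob nu g = own_prob i (nu i) o * mates_prob i nu g] whenever agent [i]'s
   own trajectory in [g] is [o], [own_prob i (nu i) o * hidden_prob i nu K o] is the
   probability of [o]; imaginary play weights [o] by [hidden_prob] instead. *)
Definition hidden_prob i nu K (o : seq (S i * A i)) : R :=
  \sum_(g : K.-tuple X) ind (map (own i) g == o) * mates_prob i nu g.

Definition act_marg (s : JS S) i (al : A i) : R :=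
  \sum_(a : JA A) ind (a i == al) * pi s a.

Lemma traj_prob_cons nu x g :
  traj_prob nu (x :: g) = pdist nu x.1 * pol x * traj_prob (step_dist x) g.
Proof. by []. Qed.

Lemma trans_prob_cons nu x g :
  trans_prob nu (x :: g) = pdist nu x.1 * trans_prob (step_dist x) g.
Proof. by rewrite /trans_prob /= mulr1. Qed.

Lemma mates_prob_cons i nu x g :
  mates_prob i nu (x :: g) = pdist_but i nu x.1 * pol x * mates_prob i (step_dist x) g.
Proof. by []. Qed.

Lemma own_prob_cons i (nu : S i -> R) y o :
  own_prob i nu (y :: o) = nu y.1 * own_prob i (T i y.1 y.2) o.
Proof. by rewrite /own_prob /= mulr1. Qed.

Lemma ind_ge0 b : 0 <= ind b. Proof. by case: b; rewrite /Defs.ind. Qed.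
Lemma pi_ge0 s a : 0 <= pi s a. Proof. by case: (pi_dist s). Qed.
Lemma pol_ge0 x : 0 <= pol x. Proof. exact: pi_ge0. Qed.
Lemma T_ge0 i s a y : 0 <= T i s a y. Proof. by case: (T_dist i s a). Qed.

Lemma dist_family_ge0 nu : dist_family nu -> forall j y, 0 <= nu j y.
Proof. by move=> nu_dist j y; case: (nu_dist j). Qed.

Lemma step_dist_family x : dist_family (step_dist x).
Proof. by move=> j; apply: T_dist. Qed.

Lemma init_dist_family : dist_family init_dist.
Proof.
move=> j; split=> [y|]; first exact: ind_ge0.
by rewrite /init_dist (bigD1 (sI j)) //= eqxx big1 ?addr0 // => y /negbTE ->.
Qed.

Lemma pdist_ge0 nu s : dist_family nu -> 0 <= pdist nu s.
Proof. by move=> nu_dist; apply: prodr_ge0 => j _; apply: dist_family_ge0. Qed.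

Lemma pdist_but_ge0 i nu s : dist_family nu -> 0 <= pdist_but i nu s.
Proof. by move=> nu_dist; apply: prodr_ge0 => j _; apply: dist_family_ge0. Qed.

Lemma traj_prob_ge0 nu g : dist_family nu -> 0 <= traj_prob nu g.
Proof.
move=> nu_dist; apply: chain_ge0 => [t x|s|x s]; first exact: pol_ge0.
  exact: pdist_ge0.
exact/pdist_ge0/step_dist_family.
Qed.

Lemma trans_prob_ge0 nu g : dist_family nu -> 0 <= trans_prob nu g.
Proof.
move=> nu_dist; apply: chain_ge0 => [//|s|x s]; first exact: pdist_ge0.
exact/pdist_ge0/step_dist_family.
Qed.

Lemma mates_prob_ge0 i nu g : dist_family nu -> 0 <= mates_prob i nu g.
Proof.
move=> nu_dist; apply: chain_ge0 => [t x|s|x s]; first exact: pol_ge0.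
  exact: pdist_but_ge0.
exact/pdist_but_ge0/step_dist_family.
Qed.

Lemma own_prob_ge0 i (nu : S i -> R) o : (forall y, 0 <= nu y) -> 0 <= own_prob i nu o.
Proof. by move=> nu_ge0; apply: chain_ge0 => // y z; apply: T_ge0. Qed.

Lemma hidden_prob_ge0 i nu K o : dist_family nu -> 0 <= hidden_prob i nu K o.
Proof.
by move=> nu_dist; apply: sumr_ge0 => g _; rewrite mulr_ge0 ?ind_ge0 ?mates_prob_ge0.
Qed.

Lemma act_marg_ge0 s i al : 0 <= act_marg s i al.
Proof. by apply: sumr_ge0 => a _; rewrite mulr_ge0 ?ind_ge0 ?pi_ge0. Qed.

Lemma pi_le_act_marg s i a : pi s a <= act_marg s i (a i).
Proof.
rewrite /act_marg (bigD1 a) //= eqxx /Defs.ind mul1r lerDl.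
by apply: sumr_ge0 => b _; rewrite mulr_ge0 ?ind_ge0 ?pi_ge0.
Qed.

Lemma pdist_split i nu s : pdist nu s = nu i (s i) * pdist_but i nu s.
Proof. by rewrite /pdist (bigD1 i). Qed.

Lemma traj_prob_own i nu g :
  traj_prob nu g = own_prob i (nu i) (map (own i) g) * mates_prob i nu g.
Proof.
elim: g nu => [|x g IH] nu; first by rewrite /= mulr1.
rewrite traj_prob_cons IH mates_prob_cons map_cons own_prob_cons (pdist_split i) /=.
ring.
Qed.

Lemma mates_prob_le_hidden i nu g :
  dist_family nu -> mates_prob i nu g <= hidden_prob i nu (size g) (map (own i) g).
Proof.
move=> nu_dist; rewrite /hidden_prob (bigD1 (Tuple (eqxx (size g)))) //= eqxx.
rewrite /Defs.ind mul1r lerDl sumr_ge0 // => t _.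
by rewrite mulr_ge0 ?ind_ge0 ?mates_prob_ge0.
Qed.

Lemma sum_pdist nu : dist_family nu -> \sum_(s : JS S) pdist nu s = 1.
Proof. by move=> nu_dist; rewrite /pdist sum_dffun_prod big1 // => j _; case: (nu_dist j). Qed.

Lemma sum_pdist_comp i nu (G : S i -> R) : dist_family nu ->
  \sum_(s : JS S) pdist nu s * G (s i) = \sum_(y : S i) nu i y * G y.
Proof.
move=> nu_dist.
pose Gt (t : {j : 'I_N & S j}) := \sum_(y : S i) ind (t == Tagged S y) * G y.
have GtE y : Gt (Tagged S y) = G y.
  by rewrite /Gt; under eq_bigr do rewrite eq_Tagged /= eq_sym; apply: sum_ind_eq.
pose F j (y : S j) := nu j y * (if j == i then Gt (Tagged S y) else 1).
transitivity (\sum_(s : JS S) \prod_j F j (s j)).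
  apply: eq_bigr => s _; rewrite big_split /= -/(pdist nu s); congr (_ * _).
  by rewrite (bigD1 i) //= eqxx big1 ?mulr1 ?GtE // => j /negbTE ->.
rewrite sum_dffun_prod (bigD1 i) //= [X in _ * X]big1 ?mulr1.
  by apply: eq_bigr => y _; rewrite /F eqxx GtE.
by move=> j /negbTE ne; under eq_bigr do rewrite /F ne mulr1; case: (nu_dist j).
Qed.

Lemma sum_traj_prob K nu : dist_family nu -> \sum_(g : K.-tuple X) traj_prob nu g = 1.
Proof.
elim: K nu => [|K IH] nu nu_dist; first by rewrite (sum_tuple0 (traj_prob nu)).
rewrite (sum_tuple_cons K (traj_prob nu)).
transitivity (\sum_(x : X) pdist nu x.1 * pol x).
  apply: eq_bigr => x _; rewrite -[RHS]mulr1 -(IH (step_dist x)) ?mulr_sumr //.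
  exact: step_dist_family.
rewrite sum_pair -(sum_pdist nu nu_dist); apply: eq_bigr => s _.
by rewrite /pol /= -mulr_sumr; case: (pi_dist s) => _ ->; rewrite mulr1.
Qed.

Lemma sum_by_own_traj i nu K (Phi : seq (S i * A i) -> R) :
  \sum_(g : K.-tuple X) traj_prob nu g * Phi (map (own i) g) =
  \sum_(o : K.-tuple (S i * A i)) own_prob i (nu i) o * hidden_prob i nu K o * Phi o.
Proof.
transitivity (\sum_(g : K.-tuple X) \sum_(o : K.-tuple (S i * A i))
   ind (map (own i) g == o) * (own_prob i (nu i) o * mates_prob i nu g * Phi o)).
  apply: eq_bigr => g _; rewrite (traj_prob_own i).
  rewrite -(sum_ind_eq (map_tuple (own i) g)
    (fun o : K.-tuple _ => own_prob i (nu i) o * mates_prob i nu g * Phi o)) /=.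
  by apply: eq_bigr => o _; rewrite eq_sym.
rewrite exchange_big /=; apply: eq_bigr => o _.
rewrite /hidden_prob mulr_sumr mulr_suml; apply: eq_bigr => g _; ring.
Qed.

Lemma sum_act_marg s i : \sum_(al : A i) act_marg s i al = 1.
Proof.
case: (pi_dist s) => _ <-.
by rewrite (sum_partition_ind (fun a : JA A => a i) (pi s)).
Qed.

(* Subadditivity of entropy: [H (pi s) <= \sum_i H (act_marg s i)]. *)
Lemma gibbs_act_marg s :
  0 <= \sum_(a : JA A) pi s a * (ln (pi s a) - \sum_i ln (act_marg s i (a i))).
Proof.
have marg_gt0 a : 0 < pi s a -> forall i, 0 < act_marg s i (a i).
  by move=> pi_gt0 i; apply: lt_le_trans pi_gt0 (pi_le_act_marg _ _ _).
have pi_eq0 a : ~~ (0 < pi s a) -> pi s a = 0.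
  by rewrite -leNgt => pi_le0; apply/le_anti; rewrite pi_le0 pi_ge0.
rewrite (eq_bigr (fun a => pi s a * (ln (pi s a) - ln (\prod_i act_marg s i (a i))))); last first.
  move=> a _; have [pi_gt0|/pi_eq0->] := boolP (0 < pi s a); last by rewrite !mul0r.
  by rewrite ln_prod // => i; apply: marg_gt0.
apply: gibbs_inequality => [a|a pi_gt0|]; first exact: pi_ge0.
  by split=> //; apply: prodr_gt0 => i _; apply: marg_gt0.
apply: (@le_trans _ _ (\sum_(a : JA A) \prod_i act_marg s i (a i))).
  apply: ler_sum => a _; have [pi_gt0|/pi_eq0->] := boolP (0 < pi s a).
    by rewrite mulrC -mulrA mulVf ?mulr1 // gt_eqF.
  by rewrite mul0r; apply: prodr_ge0 => i _; apply: act_marg_ge0.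
rewrite (sum_dffun_prod (fun i al => act_marg s i al)).
by case: (pi_dist s) => _ ->; rewrite big1 // => i _; apply: sum_act_marg.
Qed.

Lemma sum_traj_prob_cons K nu (F : X -> R) : dist_family nu ->
  \sum_(x : X) \sum_(t : K.-tuple X) traj_prob nu (x :: t) * F x =
  \sum_(s : JS S) pdist nu s * \sum_(a : JA A) pi s a * F (s, a).
Proof.
move=> nu_dist; rewrite sum_pair; apply: eq_bigr => s _.
rewrite mulr_sumr; apply: eq_bigr => a _.
rewrite -[RHS]mulr1 -(sum_traj_prob K (step_dist (s, a))) ?mulr_sumr; last first.
  exact: step_dist_family.
by apply: eq_bigr => t _; rewrite traj_prob_cons /pol /=; ring.
Qed.

Lemma policy_gain_ge0 K nu : dist_family nu ->
  0 <= \sum_(x : X) \sum_(t : K.-tuple X)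
         traj_prob nu (x :: t) * (ln (pol x) - \sum_i ln (act_marg x.1 i (x.2 i))).
Proof.
move=> nu_dist; rewrite (sum_traj_prob_cons K nu
  (fun x => ln (pol x) - \sum_i ln (act_marg x.1 i (x.2 i)))) //.
by apply: sumr_ge0 => s _; rewrite mulr_ge0 ?gibbs_act_marg ?pdist_ge0.
Qed.

Lemma hidden_prob_gt0 i nu g : dist_family nu -> 0 < traj_prob nu g ->
  0 < hidden_prob i nu (size g) (map (own i) g).
Proof.
move=> nu_dist; rewrite (traj_prob_own i) mulr_ge0_gt0 ?mates_prob_ge0 //; last first.
  exact/own_prob_ge0/dist_family_ge0.
by case/andP=> _ mates_gt0; apply: lt_le_trans mates_gt0 (mates_prob_le_hidden _ _ _ _).
Qed.

Lemma traj_prob_cons_gt0 nu x t : dist_family nu -> 0 < traj_prob nu (x :: t) ->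
  0 < pol x /\ 0 < traj_prob (step_dist x) t.
Proof.
move=> nu_dist; have x_dist := step_dist_family x.
rewrite traj_prob_cons !mulr_ge0_gt0 ?mulr_ge0 ?pdist_ge0 ?pol_ge0 ?traj_prob_ge0 //.
by case/andP=> /andP[_ ->] ->.
Qed.

Lemma hidden_prob_cons_gt0 i nu x t : dist_family nu -> 0 < traj_prob nu (x :: t) ->
  [/\ 0 < act_marg x.1 i (x.2 i),
      0 < hidden_prob i (step_dist x) (size t) (map (own i) t) &
      0 < hidden_prob i nu (size t).+1 (own i x :: map (own i) t)].
Proof.
move=> nu_dist traj_gt0; have [pol_gt0 tail_gt0] := traj_prob_cons_gt0 nu x t nu_dist traj_gt0.
split; first exact: lt_le_trans pol_gt0 (pi_le_act_marg _ _ _).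
  exact/hidden_prob_gt0/tail_gt0/step_dist_family.
exact: (hidden_prob_gt0 i nu (x :: t)).
Qed.

Definition own_future i nu K (y : S i * A i) : R :=
  \sum_(o : K.-tuple (S i * A i)) own_prob i (T i y.1 y.2) o * hidden_prob i nu K.+1 (y :: o).

Lemma own_future_ge0 i nu K y : dist_family nu -> 0 <= own_future i nu K y.
Proof.
move=> nu_dist; apply: sumr_ge0 => o _; rewrite mulr_ge0 ?hidden_prob_ge0 //.
by apply: own_prob_ge0 => z; apply: T_ge0.
Qed.

Lemma hidden_ratio_cons_le i K nu x : dist_family nu ->
  \sum_(t : K.-tuple X) traj_prob nu (x :: t) *
     (hidden_prob i nu K.+1 (own i x :: map (own i) t) /
      (act_marg x.1 i (x.2 i) * hidden_prob i (step_dist x) K (map (own i) t)))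
  <= pdist nu x.1 * pol x * (own_future i nu K (own i x) / act_marg x.1 i (x.2 i)).
Proof.
move=> nu_dist; set c := act_marg x.1 i (x.2 i).
pose Phi o := hidden_prob i nu K.+1 (own i x :: o) / (c * hidden_prob i (step_dist x) K o).
rewrite [X in X <= _](_ : _ = pdist nu x.1 * pol x *
    \sum_(t : K.-tuple X) traj_prob (step_dist x) t * Phi (map (own i) t)); last first.
  by rewrite mulr_sumr; apply: eq_bigr => t _; rewrite traj_prob_cons /Phi; ring.
rewrite sum_by_own_traj ler_wpM2l ?mulr_ge0 ?pdist_ge0 ?pol_ge0 //.
rewrite /own_future mulr_suml; apply: ler_sum => o _.
rewrite -mulrA; apply: ler_mulKdiv; last exact: act_marg_ge0.
- exact/own_prob_ge0/dist_family_ge0/step_dist_family.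
- exact/hidden_prob_ge0/step_dist_family.
- exact: hidden_prob_ge0.
Qed.

Lemma act_ratio_sum_le i K nu : dist_family nu ->
  \sum_(x : X) pdist nu x.1 * pol x * (own_future i nu K (own i x) / act_marg x.1 i (x.2 i))
  <= \sum_(s : JS S) pdist nu s * \sum_(al : A i) own_future i nu K (s i, al).
Proof.
move=> nu_dist; rewrite sum_pair; apply: ler_sum => s _.
set F := own_future i nu K.
rewrite (eq_bigr (fun a => pdist nu s * (pi s a / act_marg s i (a i) * F (s i, a i))));
  last by move=> a _; rewrite /pol /own /=; ring.
rewrite -mulr_sumr ler_wpM2l ?pdist_ge0 //.
rewrite (sum_partition_ind (fun a : JA A => a i)); apply: ler_sum => al _.
have -> : \sum_(a : JA A) ind (a i == al) * (pi s a / act_marg s i (a i) * F (s i, a i)) =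
    act_marg s i al / act_marg s i al * F (s i, al).
  rewrite /act_marg !mulr_suml; apply: eq_bigr => a _.
  by case: eqP => [<-|_]; rewrite /Defs.ind ?mul1r ?mul0r.
have [marg_gt0|] := ltP 0 (act_marg s i al); first by rewrite divff ?gt_eqF ?mul1r.
move=> marg_le0; have -> : act_marg s i al = 0.
  by apply/le_anti; rewrite marg_le0 act_marg_ge0.
by rewrite !mul0r own_future_ge0.
Qed.

Lemma sum_own_future i K nu : dist_family nu ->
  \sum_(s : JS S) pdist nu s * \sum_(al : A i) own_future i nu K (s i, al) = 1.
Proof.
move=> nu_dist; rewrite (sum_pdist_comp i nu (fun y => \sum_al own_future i nu K (y, al))) //.
rewrite -(sum_traj_prob K.+1 nu nu_dist).
under [RHS]eq_bigr do rewrite -[traj_prob _ _]mulr1.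
rewrite (sum_by_own_traj i nu K.+1 (fun _ => 1)).
rewrite (sum_tuple_cons K (fun o => own_prob i (nu i) o * hidden_prob i nu K.+1 o * 1)).
rewrite sum_pair; apply: eq_bigr => y _; rewrite mulr_sumr; apply: eq_bigr => al _.
by rewrite /own_future mulr_sumr; apply: eq_bigr => o _; rewrite own_prob_cons /=; ring.
Qed.

Lemma hidden_gain_ge0 i K nu : dist_family nu ->
  0 <= \sum_(x : X) \sum_(t : K.-tuple X) traj_prob nu (x :: t) *
         (ln (act_marg x.1 i (x.2 i)) + ln (hidden_prob i (step_dist x) K (map (own i) t))
          - ln (hidden_prob i nu K.+1 (own i x :: map (own i) t))).
Proof.
move=> nu_dist.
pose w (p : X * K.-tuple X) := traj_prob nu (p.1 :: p.2).
pose u (p : X * K.-tuple X) :=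
  act_marg p.1.1 i (p.1.2 i) * hidden_prob i (step_dist p.1) K (map (own i) p.2).
pose v (p : X * K.-tuple X) := hidden_prob i nu K.+1 (own i p.1 :: map (own i) p.2).
have uv_gt0 p : 0 < w p -> 0 < u p /\ 0 < v p.
  by case/(hidden_prob_cons_gt0 i _ _ _ nu_dist); rewrite size_tuple => *; rewrite mulr_gt0.
rewrite (pair_bigA _ (fun x (t : K.-tuple X) => traj_prob nu (x :: t) *
  (ln (act_marg x.1 i (x.2 i)) + ln (hidden_prob i (step_dist x) K (map (own i) t))
    - ln (hidden_prob i nu K.+1 (own i x :: map (own i) t))))) /=.
rewrite (eq_bigr (fun p => w p * (ln (u p) - ln (v p)))); last first.
  move=> p _; have [w_gt0|] := ltP 0 (w p).
    case/(hidden_prob_cons_gt0 i _ _ _ nu_dist): w_gt0; rewrite size_tuple => c_gt0 h_gt0 _.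
    by rewrite /u lnM ?posrE.
  move=> w_le0; have w0 : w p = 0 by apply/le_anti; rewrite w_le0 traj_prob_ge0.
  by rewrite /w in w0 *; rewrite w0 !mul0r.
apply: gibbs_inequality => [p|p|]; [exact: traj_prob_ge0 | exact: uv_gt0 |].
rewrite -(pair_bigA _ (fun x (t : K.-tuple X) => traj_prob nu (x :: t))).
rewrite -(sum_tuple_cons K (traj_prob nu)) sum_traj_prob //.
rewrite -(sum_own_future i K nu nu_dist); apply: le_trans (act_ratio_sum_le i K nu nu_dist).
rewrite -(pair_bigA _ (fun x (t : K.-tuple X) => traj_prob nu (x :: t) *
  (hidden_prob i nu K.+1 (own i x :: map (own i) t) /
   (act_marg x.1 i (x.2 i) * hidden_prob i (step_dist x) K (map (own i) t))))).
by apply: ler_sum => x _; apply: hidden_ratio_cons_le.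
Qed.

(* [ln (img_prefix m.+1 h) - ln (img_prefix m h)] in terms of [g = drop m h], see
   [img_prefix_step]. *)
Definition log_gain nu (g : seq X) : R :=
  if g is x :: g' then
    ln (pol x) + \sum_i ln (hidden_prob i (step_dist x) (size g') (map (own i) g'))
    - \sum_i ln (hidden_prob i nu (size g').+1 (map (own i) g))
  else 0.

Lemma log_gain_expect_ge0 K nu : dist_family nu ->
  0 <= \sum_(g : K.+1.-tuple X) traj_prob nu g * log_gain nu g.
Proof.
move=> nu_dist; rewrite (sum_tuple_cons K (fun g => traj_prob nu g * log_gain nu g)).
have -> : \sum_(x : X) \sum_(t : K.-tuple X) traj_prob nu (x :: t) * log_gain nu (x :: t) =
  \sum_(x : X) \sum_(t : K.-tuple X)
    (traj_prob nu (x :: t) * (ln (pol x) - \sum_i ln (act_marg x.1 i (x.2 i)))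
     + \sum_i traj_prob nu (x :: t) *
         (ln (act_marg x.1 i (x.2 i)) + ln (hidden_prob i (step_dist x) K (map (own i) t))
          - ln (hidden_prob i nu K.+1 (own i x :: map (own i) t)))).
  apply: eq_bigr => x _; apply: eq_bigr => t _.
  rewrite /log_gain size_tuple -mulr_sumr -mulrDr; congr (_ * _).
  rewrite /= sumrB big_split /=; lra.
rewrite (eq_bigr _ (fun x _ => big_split _ _ _ _ _)) big_split /=.
apply: addr_ge0; first exact: policy_gain_ge0.
rewrite (eq_bigr _ (fun x _ => exchange_big _ _ _ _ _ _)) /= exchange_big /=.
by apply: sumr_ge0 => i _; apply: hidden_gain_ge0.
Qed.

Definition prefix_dist nu (h1 : seq X) : forall j, S j -> R :=
  if h1 is x :: h1' then step_dist (last x h1') else nu.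

(* Factored form of [img_prob m h], see [img_prob_prefix]. *)
Definition img_prefix (m : nat) (h : seq X) : R :=
  let nu := prefix_dist init_dist (take m h) in
  traj_prob init_dist (take m h) * trans_prob nu (drop m h)
  * \prod_i hidden_prob i nu (size h - m) (map (own i) (drop m h)).

Lemma prefix_dist_family nu h1 : dist_family nu -> dist_family (prefix_dist nu h1).
Proof. by case: h1 => [//|x h1] _; apply: step_dist_family. Qed.

Lemma prefix_dist_rcons nu h1 x : prefix_dist nu (rcons h1 x) = step_dist x.
Proof. by case: h1 => [|y h1] //=; rewrite last_rcons. Qed.

Lemma chain_next_pdist nu h1 :
  chain_next (pdist nu) (fun x => pdist (step_dist x)) h1 = pdist (prefix_dist nu h1).
Proof. by case: h1. Qed.

Lemma traj_prob_cat nu h1 h2 :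
  traj_prob nu (h1 ++ h2) = traj_prob nu h1 * traj_prob (prefix_dist nu h1) h2.
Proof. by rewrite /traj_prob chain_cat chain_next_pdist. Qed.

Lemma pdist_init_dist s : pdist init_dist s = ind (s == sI).
Proof.
rewrite /pdist /init_dist; have [->|ne] := eqVneq s sI.
  by rewrite big1 // => j _; rewrite eqxx.
have [j ne_j] : exists j, s j != sI j.
  apply/existsP; apply: contraR ne => /existsPn eq_s; apply/eqP/ffunP => j.
  by apply/eqP; move: (eq_s j); rewrite negbK.
by rewrite (bigD1 j) //= (negbTE ne_j) /Defs.ind mul0r.
Qed.

Lemma hidden_prob_nil i nu : hidden_prob i nu 0 [::] = 1.
Proof.
rewrite /hidden_prob.
by rewrite (sum_tuple0 (fun g => ind (map (own i) g == [::]) * mates_prob i nu g)) mul1r.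
Qed.

Lemma full_prob_traj h : full_prob sI T pi h = traj_prob init_dist h.
Proof. by case: h => [|d h'] //; rewrite /traj_prob (chain_nth _ _ _ _ d) pdist_init_dist. Qed.

Lemma img_prefix_size h : img_prefix (size h) h = traj_prob init_dist h.
Proof.
rewrite /img_prefix take_size drop_size subnn /trans_prob /= mulr1.
by rewrite big1 ?mulr1 // => i _; apply: hidden_prob_nil.
Qed.

Lemma img_head_chain d h L : (0 < size h)%N -> (L <= size h)%N ->
  ind ((nth d h 0).1 == sI) * \prod_(t < L) pi (nth d h t).1 (nth d h t).2
  * \prod_(t < (size h).-1) JT T (nth d h t).1 (nth d h t).2 (nth d h t.+1).1
  = traj_prob init_dist (take L h) * trans_prob (prefix_dist init_dist (take L h)) (drop L h).
Proof.
move=> h_gt0 le_L; pose w t x := if (t < L)%N then pol x else 1.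
have -> : \prod_(t < L) pi (nth d h t).1 (nth d h t).2 = \prod_(t < size h) w t (nth d h t).
  rewrite (big_ord_widen _ (fun t => pi (nth d h t).1 (nth d h t).2) le_L) big_mkcond /=.
  by apply: eq_bigr => t _; rewrite /w.
transitivity (chain w (pdist init_dist) (fun x => pdist (step_dist x)) h).
  by rewrite (chain_nth _ _ _ _ d) -pdist_init_dist; case: h h_gt0 {le_L}.
rewrite -{1}(cat_take_drop L h) chain_cat size_takel // chain_next_pdist.
congr (_ * _); apply: eq_chain => t x; rewrite ?size_takel // /w.
  by move=> ->.
by move=> _; rewrite ltnNge leq_addr.
Qed.


(* The hidden variables of agent [i] in [img_prob_d], summed out. *)
Lemma hidden_tuple_sum i K (d : X) (o : seq (S i * A i)) (c0 : JS S -> R) : size o = K ->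
  \sum_(hs : K.-tuple (JS S)) \sum_(ha : K.-tuple (JA A)) \prod_(k < K)
    (ind (nth d.1 hs k i == (nth (own i d) o k).1)
     * ind (nth d.2 ha k i == (nth (own i d) o k).2)
     * (if k == 0%N :> nat then c0 (nth d.1 hs k)
        else pdist_but i (step_dist (nth d.1 hs k.-1, nth d.2 ha k.-1)) (nth d.1 hs k))
     * pi (nth d.1 hs k) (nth d.2 ha k))
  = \sum_(g : K.-tuple X) ind (map (own i) g == o)
      * chain (fun _ => pol) c0 (fun x => pdist_but i (step_dist x)) g.
Proof.
move=> size_o.
rewrite (sum_tuple_zip K (fun g => ind (map (own i) g == o)
  * chain (fun _ => pol) c0 (fun x => pdist_but i (step_dist x)) g)).
apply: eq_bigr => hs _; apply: eq_bigr => ha _.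
set g := zip hs ha.
have size_g : size g = K by rewrite size1_zip !size_tuple.
have nth_g k : (k < K)%N -> nth d g k = (nth d.1 hs k, nth d.2 ha k).
  by move=> lt_k; rewrite -nth_zip ?size_tuple //; case: d.
rewrite (chain_nth _ _ _ _ d) size_g big_split big_split /=.
under eq_bigr do rewrite ind_andb.
rewrite prod_ind (@eq_seq_nth _ _ _ K (own i d)) ?size_map //.
have -> : [forall k : 'I_K, nth (own i d) (map (own i) g) k == nth (own i d) o k] =
  [forall k : 'I_K, (nth d.1 hs k i == (nth (own i d) o k).1) &&
                    (nth d.2 ha k i == (nth (own i d) o k).2)].
  by apply: eq_forallb => k; rewrite (nth_map d) ?size_g ?ltn_ord // nth_g ?ltn_ord.
have -> : \prod_(k < K) pi (nth d.1 hs k) (nth d.2 ha k) = \prod_(t < K) pol (nth d g t).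
  by apply: eq_bigr => k _; rewrite nth_g ?ltn_ord.
case: K hs ha size_o g size_g nth_g => [|K] hs ha size_o g size_g nth_g.
  by rewrite (size0nil size_g) !big_ord0 /= !mulr1.
set pols := \prod_(t < K.+1) pol (nth d g t).
rewrite big_ord_recl /=.
have -> : \prod_(k < K) (if bump 0 k == 0%N :> nat then c0 (nth d.1 hs (bump 0 k))
     else pdist_but i (step_dist (nth d.1 hs (bump 0 k).-1, nth d.2 ha (bump 0 k).-1))
            (nth d.1 hs (bump 0 k)))
   = \prod_(t < K) pdist_but i (step_dist (nth d g t)) (nth d g t.+1).1.
  apply: eq_bigr => k _; rewrite /bump /= add1n.
  by rewrite (nth_g k (ltnW (ltn_ord k))) (nth_g k.+1 (ltn_ord k)).
have -> : (if g is x :: _ then c0 x.1 else 1) = c0 (nth d.1 hs 0).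
  by have := nth_g 0%N isT; case: (g) size_g => [|x g'] //= _ ->.
rewrite -!mulrA; congr (_ * (_ * _)); exact: mulrC.
Qed.

Lemma img_prob_prefix m h : (m <= size h)%N -> img_prob sI T pi m h = img_prefix m h.
Proof.
case: h => [|d h'] le_m.
  move: le_m; rewrite leqn0 => /eqP ->.
  rewrite /img_prefix /= /traj_prob /trans_prob /= !mul1r big1 // => i _.
  exact: hidden_prob_nil.
rewrite /img_prob /img_prob_d; cbv beta iota zeta; set h := d :: h'.
rewrite img_head_chain // /img_prefix; congr (_ * _); apply: eq_bigr => i _.
set nu := prefix_dist init_dist (take m h).
rewrite /hidden_prob -(hidden_tuple_sum i _ d (map (own i) (drop m h)) (pdist_but i nu));
  last by rewrite size_map size_drop.
apply: eq_bigr => hs _; apply: eq_bigr => ha _; apply: eq_bigr => k _.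
have lt_k : (k < size (drop m h))%N by rewrite size_drop ltn_ord.
rewrite (nth_map d) // nth_drop /own /=.
congr (_ * _ * _); case: (k == 0%N :> nat) => //.
rewrite /nu; have [m0|m_neq0] := eqVneq m 0%N.
  by have -> : take m h = [::] by rewrite m0.
have -> : take m h = d :: take m.-1 h' by case: (m) m_neq0.
by rewrite /= last_take // -ltnS prednK ?lt0n.
Qed.

Lemma trans_prob_gt0 nu g : dist_family nu -> 0 < traj_prob nu g -> 0 < trans_prob nu g.
Proof.
elim: g nu => [|x g IH] nu nu_dist; first by rewrite /trans_prob ltr01.
rewrite traj_prob_cons trans_prob_cons.
rewrite !mulr_ge0_gt0 ?mulr_ge0 ?pdist_ge0 ?pol_ge0 ?traj_prob_ge0 ?trans_prob_ge0 //;
  try exact: step_dist_family.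
by case/andP=> /andP[-> _] /IH ->; last exact: step_dist_family.
Qed.

Lemma traj_prob_cat_gt0 nu h1 h2 : dist_family nu -> 0 < traj_prob nu (h1 ++ h2) ->
  0 < traj_prob nu h1 /\ 0 < traj_prob (prefix_dist nu h1) h2.
Proof.
move=> nu_dist; have next_dist := prefix_dist_family nu h1 nu_dist.
by rewrite traj_prob_cat mulr_ge0_gt0 ?traj_prob_ge0 // => /andP.
Qed.

Lemma img_prefix_gt0 m h : 0 < traj_prob init_dist h -> 0 < img_prefix m h.
Proof.
rewrite -{1}(cat_take_drop m h) => /(traj_prob_cat_gt0 _ _ _ init_dist_family) [head_gt0 tail_gt0].
have nu_dist := prefix_dist_family init_dist (take m h) init_dist_family.
rewrite /img_prefix !mulr_gt0 ?trans_prob_gt0 //.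
apply: prodr_gt0 => i _; rewrite -size_drop.
exact: hidden_prob_gt0.
Qed.

Lemma img_prefix_succ m h x g : drop m h = x :: g ->
  img_prefix m.+1 h *
    \prod_i hidden_prob i (prefix_dist init_dist (take m h)) (size g).+1 (map (own i) (x :: g)) =
  img_prefix m h * (pol x * \prod_i hidden_prob i (step_dist x) (size g) (map (own i) g)).
Proof.
move=> drop_m; set nu := prefix_dist init_dist (take m h).
have take_succ : take m.+1 h = rcons (take m h) x.
  by rewrite -addn1 takeD drop_m /= take0 cats1.
have drop_succ : drop m.+1 h = g by rewrite -addn1 addnC -drop_drop drop_m drop1.
have size_g : (size h - m.+1 = size g)%N by rewrite -drop_succ size_drop.
have size_g' : (size h - m = (size g).+1)%N by rewrite -size_drop drop_m.
rewrite /img_prefix -/nu take_succ drop_succ size_g size_g' drop_m prefix_dist_rcons.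
rewrite -cats1 traj_prob_cat -/nu trans_prob_cons traj_prob_cons /traj_prob /= mulr1.
ring.
Qed.

Lemma img_prefix_step m h : (m < size h)%N -> 0 < traj_prob init_dist h ->
  ln (img_prefix m.+1 h) - ln (img_prefix m h) =
  log_gain (prefix_dist init_dist (take m h)) (drop m h).
Proof.
move=> lt_m traj_gt0.
have [x [g drop_m]] : exists x g, drop m h = x :: g.
  case: h lt_m {traj_gt0} => [//|d h'] lt_m.
  by exists (nth d (d :: h') m), (drop m.+1 (d :: h')); apply: drop_nth.
set nu := prefix_dist init_dist (take m h).
have nu_dist : dist_family nu by apply: prefix_dist_family; apply: init_dist_family.
have := traj_gt0; rewrite -{1}(cat_take_drop m h) drop_m.
case/(traj_prob_cat_gt0 _ _ _ init_dist_family) => _ cons_gt0.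
have [pol_gt0 _] := traj_prob_cons_gt0 nu x g nu_dist cons_gt0.
have H_gt0 i := hidden_prob_cons_gt0 i nu x g nu_dist cons_gt0.
have img0_gt0 := img_prefix_gt0 m h traj_gt0.
have img1_gt0 := img_prefix_gt0 m.+1 h traj_gt0.
have := img_prefix_succ m h x g drop_m.
set I1 := img_prefix m.+1 h in img1_gt0 *; set I0 := img_prefix m h in img0_gt0 *.
set Hnu := \prod_i hidden_prob i _ (size g).+1 _.
set Hstep := \prod_i hidden_prob i (step_dist x) _ _.
have Hnu_gt0 : 0 < Hnu by apply: prodr_gt0 => i _; case: (H_gt0 i).
have Hstep_gt0 : 0 < Hstep by apply: prodr_gt0 => i _; case: (H_gt0 i).
clearbody I1 I0.
move/(congr1 (@ln R)); rewrite !lnM ?posrE ?mulr_gt0 // /Hnu /Hstep.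
rewrite !ln_prod => [|i|i]; try by case: (H_gt0 i).
by rewrite /log_gain /nu; lra.
Qed.

Lemma loss_time_le_size (f : seq X -> bool) h : (loss_time f h <= size h)%N.
Proof. by rewrite /loss_time -[X in (_ <= X)%N](size_iota 0) find_size. Qed.

Lemma ltn_loss_time (f : seq X -> bool) m h : (m < size h)%N ->
  (m < loss_time f h)%N = all (fun t => f (take t h)) (iota 0 m.+1).
Proof.
move=> lt_m; rewrite /loss_time -(subnKC lt_m) iotaD find_cat size_iota.
rewrite -[all _ _]negbK -has_predC; case: ifP => [has_loss|_]; last by rewrite ltn_addr.
by apply/negbTE; rewrite -leqNgt -ltnS; move: has_loss; rewrite has_find size_iota.
Qed.

Lemma img_f_prob_prefix (f : seq X -> bool) h :
  img_f_prob sI T pi f h = img_prefix (loss_time f h) h.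
Proof.
rewrite /img_f_prob; case: ltnP => [lt_L|le_L].
  by rewrite img_prob_prefix // ltnW.
have -> : loss_time f h = size h by apply/eqP; rewrite eqn_leq le_L loss_time_le_size.
by rewrite img_prefix_size full_prob_traj.
Qed.

Lemma img_loss0_prefix h : (0 < size h)%N -> img_loss_prob sI T pi 0 h = img_prefix 0 h.
Proof. by move=> h_gt0; rewrite /img_loss_prob h_gt0 img_prob_prefix. Qed.

Lemma ln_img_telescope (f : seq X -> bool) h : 0 < traj_prob init_dist h ->
  ln (img_prefix (loss_time f h) h) - ln (img_prefix 0 h) =
  \sum_(m < size h) ind (m < loss_time f h)%N
                    * log_gain (prefix_dist init_dist (take m h)) (drop m h).
Proof.
move=> traj_gt0; have := loss_time_le_size f h; set L := loss_time f h => le_L.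
have -> : \sum_(m < size h) ind (m < L)%N * log_gain (prefix_dist init_dist (take m h)) (drop m h)
    = \sum_(m < L) log_gain (prefix_dist init_dist (take m h)) (drop m h).
  rewrite (big_ord_widen _ (fun m => log_gain (prefix_dist init_dist (take m h)) (drop m h)) le_L).
  rewrite [RHS]big_mkcond /=; apply: eq_bigr => m _.
  by rewrite /Defs.ind; case: ifP; rewrite ?mul1r ?mul0r.
rewrite -(telescope_sumr (fun m => ln (img_prefix m h)) (leq0n L)) big_mkord.
by apply: eq_bigr => m _; rewrite img_prefix_step // (leq_trans _ le_L).
Qed.

Lemma ltn_loss_time_cat (f : seq X -> bool) h1 h2 : (0 < size h2)%N ->
  (size h1 < loss_time f (h1 ++ h2))%N = all (fun t => f (take t h1)) (iota 0 (size h1).+1).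
Proof.
move=> h2_gt0; rewrite ltn_loss_time; last by rewrite size_cat -addn1 leq_add2l.
apply: eq_in_all => t; rewrite mem_iota add0n ltnS => /andP[_ le_t].
rewrite take_cat; case: ltnP => // ge_t.
have -> : t = size h1 by apply/eqP; rewrite eqn_leq le_t ge_t.
by rewrite subnn take0 cats0 take_size.
Qed.

Lemma loss_gain_expect_ge0 (f : seq X -> bool) n m : (m < n)%N ->
  0 <= \sum_(h : n.-tuple X) traj_prob init_dist h *
         (ind (m < loss_time f h)%N * log_gain (prefix_dist init_dist (take m h)) (drop m h)).
Proof.
move=> lt_m; have [k ->] : exists k, n = (m + k.+1)%N.
  by exists (n - m.+1)%N; rewrite addnS -addSn subnKC.
rewrite (sum_tuple_cat m k.+1 (fun h => traj_prob init_dist h *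
  (ind (m < loss_time f h)%N * log_gain (prefix_dist init_dist (take m h)) (drop m h)))).
apply: sumr_ge0 => h1 _; have size_h1 : size h1 = m by rewrite size_tuple.
set nu := prefix_dist init_dist h1.
rewrite (eq_bigr (fun h2 : k.+1.-tuple X => traj_prob init_dist h1 *
    ind (all (fun t => f (take t h1)) (iota 0 m.+1)) * (traj_prob nu h2 * log_gain nu h2)));
  last first.
  move=> h2 _; have := ltn_loss_time_cat f h1 h2; rewrite !size_tuple => -> //.
  by rewrite traj_prob_cat (take_size_cat _ size_h1) (drop_size_cat _ size_h1) -/nu; ring.
rewrite -mulr_sumr mulr_ge0 ?mulr_ge0 ?ind_ge0 ?traj_prob_ge0 //; first exact: init_dist_family.
exact/log_gain_expect_ge0/prefix_dist_family/init_dist_family.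
Qed.

Lemma KL_n_img_f_le (f : seq X -> bool) n : (0 < n)%N ->
  (KL_n n (full_prob sI T pi) (img_f_prob sI T pi f)
   <= KL_n n (full_prob sI T pi) (img_loss_prob sI T pi 0))%E.
Proof.
move=> n_gt0.
have P_ge0 h : 0 <= full_prob sI T pi h.
  by rewrite full_prob_traj traj_prob_ge0 //; apply: init_dist_family.
rewrite (@KL_nE _ _ n _ (img_f_prob sI T pi f)) //; last first.
  by move=> h; rewrite full_prob_traj img_f_prob_prefix; apply: img_prefix_gt0.
rewrite (@KL_nE _ _ n _ (img_loss_prob sI T pi 0)) //; last first.
  move=> h; rewrite full_prob_traj /img_loss_prob; case: ifP => [h_gt0|_].
    by rewrite img_prob_prefix //; apply: img_prefix_gt0.
  by rewrite full_prob_traj.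
rewrite lee_fin -subr_ge0 -sumrB.
rewrite (eq_bigr (fun h : n.-tuple X => \sum_(m < n) traj_prob init_dist h *
    (ind (m < loss_time f h)%N * log_gain (prefix_dist init_dist (take m h)) (drop m h)))).
  by rewrite exchange_big /=; apply: sumr_ge0 => m _; apply: loss_gain_expect_ge0.
move=> h _; have size_h : size h = n by rewrite size_tuple.
rewrite full_prob_traj img_f_prob_prefix img_loss0_prefix ?size_h // -mulr_sumr.
have -> : \sum_(m < n) ind (m < loss_time f h)%N
                      * log_gain (prefix_dist init_dist (take m h)) (drop m h)
    = \sum_(m < size h) ind (m < loss_time f h)%N
                      * log_gain (prefix_dist init_dist (take m h)) (drop m h).
  by rewrite size_h.
have [traj_gt0|] := ltP 0 (traj_prob init_dist h).
  by rewrite -ln_img_telescope //; ring.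
move=> traj_le0; have -> : traj_prob init_dist h = 0.
  by apply/le_anti; rewrite traj_le0 traj_prob_ge0 //; apply: init_dist_family.
by rewrite !mul0r subrr.
Qed.

End ImaginaryPlay.

Theorem lemma3 (R : realType) (N : nat) (S A : 'I_N -> finType)
  (sI : JS S) (T : forall i : 'I_N, S i -> A i -> S i -> R)
  (pi : JS S -> JA A -> R) (f : seq (JS S * JA A) -> bool) :
  (forall i (s : S i) (a : A i), is_dist (T i s a)) ->
  (forall s : JS S, is_dist (pi s)) ->
  (KL_path (full_prob sI T pi) (img_f_prob sI T pi f)
    <= KL_path (full_prob sI T pi) (img_loss_prob sI T pi 0))%E.
Proof.
move=> T_dist pi_dist; apply: ge_ereal_sup => _ [n _ <-].
apply: (@le_trans _ _ (KL_n n (full_prob sI T pi) (img_loss_prob sI T pi 0))).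
  case: n => [|n]; last exact: KL_n_img_f_le.
  by rewrite le_eqVlt /KL_n; apply/orP; left; apply/eqP; apply: eq_bigr => -[[|//]].
by apply: ereal_sup_ubound; exists n.
Qed.
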